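(* Let $M$ be a finite set. For any $\bar{\mathcal{F}}\subseteq\{f:M\to\mathbb{R}\}$ there exists a finite $\mathcal{F}\subseteq\{f:M\to\mathbb{R}\}$ such that $q(M,\eta,\mathcal{F})=q(M,\eta,\bar{\mathcal{F}})$ for every $\eta\in\Delta M$.
   Context: For $\eta\in\Delta M$ and $\mathcal{F}\subseteq\{f:M\to\mathbb{R}\}$, $q(M,\eta,\mathcal{F})$ denotes the unique maximizer of the Shannon entropy $-\sum_mq_m\log q_m$ (with $0\log0=0$) over $\{q\in\Delta M:\sum_mq_mf(m)=\sum_m\eta_mf(m)\ \forall f\in\mathcal{F}\}$. *)

From Stdlib Require Import ClassicalEpsilon.
From mathcomp Require Import all_boot all_order all_algebra.
From mathcomp Require Import all_classical all_reals all_analysis.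
Set Implicit Arguments. Unset Strict Implicit. Unset Printing Implicit Defensive.
Import Order.TTheory GRing.Theory Num.Theory.
Local Open Scope classical_set_scope.
Local Open Scope ring_scope.

Section MaxEnt.
Variables (R : realType) (M : finType).

Definition simplex : set (M -> R) :=
  [set q | (forall m, 0 <= q m) /\ \sum_(m : M) q m = 1].

Definition entropy (q : M -> R) : R :=
  - \sum_(m : M) (if q m == 0 then 0 else q m * ln (q m)).

Definition feasible (eta : M -> R) (F : set (M -> R)) : set (M -> R) :=
  [set q | simplex q /\
     forall f, F f -> \sum_(m : M) q m * f m = \sum_(m : M) eta m * f m].

Definition is_maxent (eta : M -> R) (F : set (M -> R)) (q : M -> R) : Prop :=
  feasible eta F q /\ forall q', feasible eta F q' -> entropy q' <= entropy q.

(* q(M, eta, F): the (unique) entropy maximizer, chosen by Hilbert's epsilon *)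
Definition maxent_q (eta : M -> R) (F : set (M -> R)) : M -> R :=
  epsilon (inhabits (fun _ : M => 0 : R)) (is_maxent eta F).

End MaxEnt.

(* The constraints defining the feasible set say that q - eta annihilates every
   f in F, so the feasible set depends only on the linear span of F.  Since
   R^M is finite dimensional, the span of Fbar is already spanned by finitely
   many of its members; taking these as F gives the same feasible set, hence
   the same maximizer. *)
From HB Require Import structures.
From mathcomp Require Import all_boot all_order all_algebra.
From mathcomp Require Import all_classical all_reals all_analysis.
Set Implicit Arguments. Unset Strict Implicit. Unset Printing Implicit Defensive.
Import Order.TTheory GRing.Theory Num.Theory.
Local Open Scope classical_set_scope.
Local Open Scope ring_scope.

Lemma linear_span_eq0 (K : fieldType) (vT : vectType K) (W : lmodType K)
    (phi : {linear vT -> W}) (X : seq vT) :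
  {in X, forall x, phi x = 0} -> {in <<X>>%VS, forall v, phi v = 0}.
Proof.
move=> phiX0 v; rewrite -[X]in_tupleE => /coord_span ->.
rewrite linear_sum big1 // => i _.
by rewrite linearZZ phiX0 ?scaler0 //; apply: mem_nth.
Qed.

Lemma exists_spanning_seq (K : fieldType) (vT : vectType K) (S : set vT) :
  exists2 X : seq vT, [set` X] `<=` S & forall v, S v -> v \in <<X>>%VS.
Proof.
(* Take X in S with \dim <<X>> maximal: no v in S can then enlarge <<X>>. *)
pose spans n := `[< exists2 X : seq vT, [set` X] `<=` S & \dim <<X>> = n >].
have spans0 : exists n, spans n.
  by exists 0%N; apply/asboolP; exists [::]; rewrite ?span_nil ?dimv0.
have spans_ub n : spans n -> (n <= \dim {:vT})%N.
  by move=> /asboolP[X _ <-]; apply: dimvS; apply: subvf.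
case: (ex_maxnP spans0 spans_ub) => _ /asboolP[X XS <-] X_max.
exists X => // v Sv.
have X_sub : (<<X>> <= <<v :: X>>)%VS by rewrite span_cons addvSr.
have : (\dim <<v :: X>> <= \dim <<X>>)%N.
  apply/X_max/asboolP; exists (v :: X) => // x /=.
  by rewrite in_cons => /predU1P[->|/XS].
rewrite (geq_leqif (dimv_leqif_sup X_sub)) => /subvP; apply.
exact/memv_span/mem_head.
Qed.

Section Feasible.
Variables (R : realType) (M : finType).

Definition dot (d : M -> R) (f : {ffun M -> R^o}) : R^o := \sum_m d m * f m.

Fact dot_is_linear d : linear (dot d).
Proof.
move=> a u v; rewrite /dot scaler_sumr -big_split; apply: eq_bigr => m _ /=.
by rewrite !ffunE mulrDr scalerAr.
Qed.

HB.instance Definition _ d := GRing.isLinear.Build R _ _ _ (dot d) (dot_is_linear d).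

Lemma moment_eqE (q eta f : M -> R) :
  \sum_m q m * f m = \sum_m eta m * f m <->
  dot (fun m => q m - eta m) [ffun m => f m] = 0.
Proof.
rewrite /dot [X in _ <-> X = 0](eq_bigr (fun m => q m * f m - eta m * f m)) => [|m _].
  by rewrite sumrB; split=> [->|/eqP]; [rewrite subrr | rewrite subr_eq0 => /eqP].
by rewrite ffunE mulrBl.
Qed.

Lemma feasibleS (eta : M -> R) (F G : set (M -> R)) :
  F `<=` G -> feasible eta G `<=` feasible eta F.
Proof. by move=> FG q [q_simplex qG]; split=> // f /FG /qG. Qed.

Lemma feasible_span (eta : M -> R) (X : seq {ffun M -> R^o}) (G : set (M -> R)) :
  (forall g, G g -> [ffun m => g m] \in <<X>>%VS) ->
  feasible eta (fun_of_fin @` [set` X]) `<=` feasible eta G.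
Proof.
move=> G_span q [q_simplex qX]; split=> // g /G_span g_span; apply/moment_eqE.
apply: (linear_span_eq0 (phi := dot _)) g_span => f fX.
by rewrite -[f]ffunK; apply/moment_eqE/qX; exists f.
Qed.

Lemma maxent_q_feasible (eta : M -> R) (F G : set (M -> R)) :
  feasible eta F = feasible eta G -> maxent_q eta F = maxent_q eta G.
Proof. by move=> FG; rewrite /maxent_q /is_maxent FG. Qed.

End Feasible.

Theorem lemma3 (R : realType) (M : finType) (Fbar : set (M -> R)) :
  exists F : set (M -> R), finite_set F /\
    forall eta : M -> R, simplex eta -> maxent_q eta F = maxent_q eta Fbar.
Proof.
have [X XFbar Fbar_span] :=
  exists_spanning_seq ((finfun : (M -> R) -> {ffun M -> R^o}) @` Fbar).
exists (fun_of_fin @` [set` X]); split; first exact/finite_image/finite_seq.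
move=> eta _; apply/maxent_q_feasible/seteqP; split.
- by apply: feasible_span => g Fbar_g; apply: Fbar_span; exists g.
- apply: feasibleS => _ [_ /XFbar[f Fbar_f <-] <-].
  by rewrite (_ : fun_of_fin _ = f) //; apply/funext => m; rewrite ffunE.
Qed.
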